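(* (i) $\simeq$ and $\simeq_\omega$ are congruences on monitors, i.e. equivalence relations preserved by $a.\_$ (for every $a\in\mathit{Act}$) and by $+$. (ii) $\simeq\ \subseteq\ \simeq_\omega$, and the inclusion is strict when $\mathit{Act}$ is finite. (iii) If $\mathit{Act}$ is infinite then $\simeq\ =\ \simeq_\omega$.
   Context: Let $\mathit{Act}$ be a nonempty set of actions, $\tau\notin\mathit{Act}$, and $\mathit{Var}$ a countably infinite set of variables disjoint from $\mathit{Act}\cup\{\tau\}$. Monitors are the terms $m,n ::= v \mid a.m \mid m+n \mid x$ ($a\in\mathit{Act}$, $x\in\mathit{Var}$), with verdicts $v ::= \mathit{end}\mid\mathit{yes}\mid\mathit{no}$; a monitor is closed if it contains no variable; a (closed) substitution maps variables to (closed) monitors, and $\sigma(m)$ denotes its application. Transitions $\xrightarrow{\alpha}$ ($\alpha\in\mathit{Act}\cup\{\tau\}$) are the least relation with $a.m\xrightarrow{a}m$; $m\xrightarrow{\alpha}m'$ implies $m+n\xrightarrow{\alpha}m'$ and $n+m\xrightarrow{\alpha}m'$; and $v\xrightarrow{\alpha}v$ for every verdict $v$. Weak transitions: $m\xRightarrow{\varepsilon}m'$ iff $m(\xrightarrow{\tau})^*m'$; $m\xRightarrow{a}m'$ iff $m\xRightarrow{\varepsilon}\xrightarrow{a}\xRightarrow{\varepsilon}m'$; $m\xRightarrow{as'}m'$ ($s'\ne\varepsilon$) iff $m\xRightarrow{a}m_1\xRightarrow{s'}m'$ for some $m_1$. For closed $m$: $L_a(m)=\{s\in\mathit{Act}^*\mid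 m\xRightarrow{s}\mathit{yes}\}$, $L_r(m)=\{s\in\mathit{Act}^*\mid m\xRightarrow{s}\mathit{no}\}$. For closed $m,n$: $m\simeq n$ (verdict equivalence) iff $L_a(m)=L_a(n)$ and $L_r(m)=L_r(n)$; $m\simeq_\omega n$ ($\omega$-verdict equivalence) iff $L_a(m)\cdot\mathit{Act}^\omega=L_a(n)\cdot\mathit{Act}^\omega$ and $L_r(m)\cdot\mathit{Act}^\omega=L_r(n)\cdot\mathit{Act}^\omega$, where $\mathit{Act}^\omega$ is the set of infinite sequences over $\mathit{Act}$ and $\cdot$ is concatenation. For open monitors, $m\simeq n$ (resp. $m\simeq_\omega n$) iff $\sigma(m)\simeq\sigma(n)$ (resp. $\sigma(m)\simeq_\omega\sigma(n)$) for every closed substitution $\sigma$. *)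

(* Monitors over an action type Act; variables are nat
   (a countably infinite set); tau is represented by None : option Act. *)
From Stdlib Require Import List Relations.
Import ListNotations.
Set Implicit Arguments.

Section Monitors.
Variable Act : Type.

Inductive verdict : Type := vend | vyes | vno.

Inductive monitor : Type :=
| MVerd : verdict -> monitor
| MPre  : Act -> monitor -> monitor
| MSum  : monitor -> monitor -> monitor
| MVar  : nat -> monitor.

Fixpoint closed (m : monitor) : Prop :=
  match m with
  | MVerd _ => True
  | MPre _ m => closed m
  | MSum m n => closed m /\ closed n
  | MVar _ => False
  end.

Definition closed_subst (sigma : nat -> monitor) : Prop :=
  forall x, closed (sigma x).

Fixpoint subst (sigma : nat -> monitor) (m : monitor) : monitor :=
  match m with
  | MVerd v => MVerd v
  | MPre a m => MPre a (subst sigma m)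
  | MSum m n => MSum (subst sigma m) (subst sigma n)
  | MVar x => sigma x
  end.

Inductive step : option Act -> monitor -> monitor -> Prop :=
| st_pre : forall a m, step (Some a) (MPre a m) m
| st_suml : forall al m n m', step al m m' -> step al (MSum m n) m'
| st_sumr : forall al m n m', step al m m' -> step al (MSum n m) m'
| st_verd : forall al v, step al (MVerd v) (MVerd v).

Definition weak_eps : monitor -> monitor -> Prop :=
  clos_refl_trans monitor (step None).

Definition weak_act (a : Act) (m m' : monitor) : Prop :=
  exists m1 m2, weak_eps m m1 /\ step (Some a) m1 m2 /\ weak_eps m2 m'.

Fixpoint weak (s : list Act) (m m' : monitor) : Prop :=
  match s with
  | [] => weak_eps m m'
  | a :: s' =>
      match s' with
      | [] => weak_act a m m'
      | _ :: _ => exists m1, weak_act a m m1 /\ weak s' m1 m'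
      end
  end.

Definition La (m : monitor) (s : list Act) : Prop := weak s m (MVerd vyes).
Definition Lr (m : monitor) (s : list Act) : Prop := weak s m (MVerd vno).

(* L . Act^omega, infinite sequences being functions nat -> Act *)
Definition omega_ext (L : list Act -> Prop) (w : nat -> Act) : Prop :=
  exists s, L s /\ forall i (d : Act), i < length s -> w i = nth i s d.

Definition cverd_eq (m n : monitor) : Prop :=
  (forall s, La m s <-> La n s) /\ (forall s, Lr m s <-> Lr n s).

Definition cverd_eq_omega (m n : monitor) : Prop :=
  (forall w, omega_ext (La m) w <-> omega_ext (La n) w) /\
  (forall w, omega_ext (Lr m) w <-> omega_ext (Lr n) w).

(* extension to open monitors via closed substitutions
   (coincides with the closed versions on closed monitors) *)
Definition verd_eq (m n : monitor) : Prop :=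
  forall sigma, closed_subst sigma -> cverd_eq (subst sigma m) (subst sigma n).

Definition verd_eq_omega (m n : monitor) : Prop :=
  forall sigma, closed_subst sigma ->
    cverd_eq_omega (subst sigma m) (subst sigma n).

Definition congruence (R : monitor -> monitor -> Prop) : Prop :=
  equivalence monitor R /\
  (forall a m n, R m n -> R (MPre a m) (MPre a n)) /\
  (forall m m' n n', R m n -> R m' n' -> R (MSum m m') (MSum n n')).

Definition finite_type : Prop := exists l : list Act, forall a, In a l.

End Monitors.

From Stdlib Require Import List Relations Classical Lia.
Import ListNotations.
Set Implicit Arguments.

(* Both equivalences only observe, for each closed instance σ(m) and each
   conclusive verdict v ∈ {yes, no}, the language [lang v (σ m)] of finite
   traces reaching v.  The proof therefore works at the level of languages:
   - weak traces are put in a uniform normal form [wk], from which we read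
     off the language equations  L(v) = all traces,  L(a.m) = a·L(m) and
     L(m+n) = L(m) ∪ L(n), plus two structural facts: monitor languages are
     closed under extension (verdicts are irrevocable), and can be cut at any
     action that does not occur syntactically in the monitor;
   - any equivalence on languages that contains pointwise equality and is
     compatible with a·_ and ∪ lifts to a congruence on monitors [lift];
     language equality and ω-equivalence are two such, giving (i), and the
     first is contained in the second, giving the inclusion of (ii);
   - for an infinite alphabet some action is fresh for both monitors, and
     extension-closure plus cutting recover finite traces from infinite ones
     (iii); for a finite alphabet Σ_a a.yes and yes are ω- but not
     verdict-equivalent, since only the latter accepts the empty trace. *)

Section Languages.
Variable A : Type.

Definition lpre (a : A) (L : list A -> Prop) (s : list A) : Prop :=
  exists s', s = a :: s' /\ L s'.

Definition lunion (L1 L2 : list A -> Prop) (s : list A) : Prop := L1 s \/ L2 s.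

Definition lang_equiv (L1 L2 : list A -> Prop) : Prop := forall s, L1 s <-> L2 s.

Definition omega_equiv (L1 L2 : list A -> Prop) : Prop :=
  forall w, omega_ext L1 w <-> omega_ext L2 w.

Definition ext_closed (L : list A -> Prop) : Prop :=
  forall s t, L s -> L (s ++ t).

Definition cut_letter (a : A) (L : list A -> Prop) : Prop :=
  forall s u, L (s ++ a :: u) -> L s.

(* The relations on languages that lift to congruences on monitors. *)
Record lang_congruence (R : (list A -> Prop) -> (list A -> Prop) -> Prop) : Prop := {
  lc_ext : forall L1 L2, lang_equiv L1 L2 -> R L1 L2;
  lc_sym : forall L1 L2, R L1 L2 -> R L2 L1;
  lc_trans : forall L1 L2 L3, R L1 L2 -> R L2 L3 -> R L1 L3;
  lc_pre : forall a L1 L2, R L1 L2 -> R (lpre a L1) (lpre a L2);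
  lc_union : forall L1 L2 L1' L2',
    R L1 L2 -> R L1' L2' -> R (lunion L1 L1') (lunion L2 L2')
}.

Lemma lang_equiv_congruence : lang_congruence lang_equiv.
Proof.
  split; unfold lang_equiv, lpre, lunion.
  - auto.
  - intros L1 L2 H s; symmetry; apply H.
  - intros L1 L2 L3 H1 H2 s; rewrite H1; apply H2.
  - intros a L1 L2 H s; split; intros (s' & -> & Hs'); exists s'; split; auto; apply H; auto.
  - intros L1 L2 L1' L2' H H' s; rewrite H, H'; tauto.
Qed.

Lemma lang_equiv_omega_equiv (L1 L2 : list A -> Prop) :
  lang_equiv L1 L2 -> omega_equiv L1 L2.
Proof.
  intros H w; split; intros (s & Hs & Hw); exists s; split; auto; apply H; auto.
Qed.

Lemma omega_ext_lpre (a : A) (L : list A -> Prop) (w : nat -> A) :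
  omega_ext (lpre a L) w <-> w 0 = a /\ omega_ext L (fun i => w (S i)).
Proof.
  split.
  - intros (s & (s' & -> & Hs') & Hw); split.
    + apply (Hw 0 a); simpl; lia.
    + exists s'; split; auto. intros i d Hi; apply (Hw (S i) d); simpl; lia.
  - intros (Hw0 & s & Hs & Hw); exists (a :: s); split.
    + exists s; auto.
    + intros [|i] d Hi; simpl; auto. apply Hw; simpl in Hi; lia.
Qed.

Lemma omega_ext_lunion (L1 L2 : list A -> Prop) (w : nat -> A) :
  omega_ext (lunion L1 L2) w <-> omega_ext L1 w \/ omega_ext L2 w.
Proof.
  split.
  - intros (s & [H|H] & Hw); [left|right]; exists s; auto.
  - intros [(s & H & Hw)|(s & H & Hw)]; exists s; split; auto; [left|right]; auto.
Qed.

Lemma omega_equiv_congruence : lang_congruence omega_equiv.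
Proof.
  split; unfold omega_equiv.
  - apply lang_equiv_omega_equiv.
  - intros L1 L2 H w; symmetry; apply H.
  - intros L1 L2 L3 H1 H2 w; rewrite H1; apply H2.
  - intros a L1 L2 H w; rewrite !omega_ext_lpre, H; tauto.
  - intros L1 L2 L1' L2' H H' w; rewrite !omega_ext_lunion, H, H'; tauto.
Qed.

Lemma prefix_of_padding (a : A) (s t : list A) :
  (forall i, i < length t -> nth i s a = nth i t a) ->
  (exists r, s = t ++ r) \/ (exists u, t = s ++ a :: u).
Proof.
  revert s; induction t as [|b t IH]; intros s Hst.
  - left; exists s; auto.
  - destruct s as [|c s].
    + assert (a = b) as -> by (apply (Hst 0); simpl; lia).
      right; exists t; reflexivity.
    + assert (c = b) as -> by (apply (Hst 0); simpl; lia).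
      destruct (IH s) as [(r & ->)|(u & ->)].
      * intros i Hi; apply (Hst (S i)); simpl; lia.
      * left; exists r; reflexivity.
      * right; exists u; reflexivity.
Qed.

(* Recovering finite traces from infinite ones: pad [s ∈ L1] with the cut
   letter [a] of [L2]; a trace of [L2] prefixing the padded word either is a
   prefix of [s] (extend it) or runs into the padding (cut it). *)
Lemma omega_incl_lang (a : A) (L1 L2 : list A -> Prop) :
  ext_closed L2 -> cut_letter a L2 ->
  (forall w, omega_ext L1 w -> omega_ext L2 w) ->
  forall s, L1 s -> L2 s.
Proof.
  intros Hext Hcut Homega s Hs.
  destruct (Homega (fun i => nth i s a)) as (t & Ht & Hw).
  { exists s; split; auto. intros i d Hi; apply nth_indep; auto. }
  destruct (prefix_of_padding a s t) as [(r & ->)|(u & ->)].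
  - intros i Hi; apply Hw; auto.
  - apply Hext; auto.
  - eapply Hcut; eauto.
Qed.

Lemma omega_equiv_lang_equiv (a : A) (L1 L2 : list A -> Prop) :
  ext_closed L1 -> ext_closed L2 -> cut_letter a L1 -> cut_letter a L2 ->
  omega_equiv L1 L2 -> lang_equiv L1 L2.
Proof.
  intros Hext1 Hext2 Hcut1 Hcut2 H s; split.
  - apply omega_incl_lang with a; auto; apply H.
  - apply omega_incl_lang with a; auto; apply H.
Qed.

End Languages.

Section WeakTraces.
Variable A : Type.
Local Notation M := (monitor A).
Local Notation V v := (MVerd A v).

(* Weak traces in uniform form: every visible action is a full weak action. *)
Fixpoint wk (s : list A) (m m' : M) : Prop :=
  match s with
  | [] => weak_eps m m'
  | a :: s' => exists m1, weak_act a m m1 /\ wk s' m1 m'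
  end.

Lemma act_eps_r (a : A) (m p q : M) :
  weak_act a m p -> weak_eps p q -> weak_act a m q.
Proof.
  intros (x & y & Hx & Hs & Hy) Hpq; exists x, y; repeat split; auto.
  eapply rt_trans; eauto.
Qed.

Lemma weak_wk (s : list A) (m m' : M) : weak s m m' <-> wk s m m'.
Proof.
  revert m; induction s as [|a [|b s] IH]; intro m; simpl; [tauto| |].
  - split.
    + intro H; exists m'; split; auto; apply rt_refl.
    + intros (m1 & H1 & H2); eapply act_eps_r; eauto.
  - split; intros (m1 & H1 & H2); exists m1; split; auto; apply IH; auto.
Qed.

Lemma wk_eps_l (s : list A) (m p q : M) : weak_eps m p -> wk s p q -> wk s m q.
Proof.
  destruct s as [|a s]; simpl; intros Hmp H.
  - eapply rt_trans; eauto.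
  - destruct H as (p1 & (x & y & Hx & Hs & Hy) & Ht).
    exists p1; split; auto. exists x, y; repeat split; auto. eapply rt_trans; eauto.
Qed.

Lemma wk_app (s t : list A) (m p q : M) : wk s m p -> wk t p q -> wk (s ++ t) m q.
Proof.
  revert m; induction s as [|a s IH]; simpl; intros m Hs Ht.
  - eapply wk_eps_l; eauto.
  - destruct Hs as (m1 & H1 & H2); exists m1; split; auto.
Qed.

Lemma eps_verd (v : verdict) (q : M) : weak_eps (V v) q -> q = V v.
Proof.
  intro H; apply clos_rt_rt1n in H; remember (V v) as x.
  induction H as [|x y z Hxy Hyz IH]; subst; auto.
  inversion Hxy; subst; auto.
Qed.

Lemma wk_verd (s : list A) (v : verdict) (q : M) : wk s (V v) q -> q = V v.
Proof.
  revert q; induction s as [|a s IH]; simpl; intros q H.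
  - apply eps_verd; auto.
  - destruct H as (m1 & (x & y & Hx & Hs & Hy) & H).
    apply eps_verd in Hx; subst. inversion Hs; subst.
    apply eps_verd in Hy; subst; auto.
Qed.

Lemma wk_verd_refl (s : list A) (v : verdict) : wk s (V v) (V v).
Proof.
  induction s as [|a s IH]; simpl.
  - apply rt_refl.
  - exists (V v); split; auto.
    exists (V v), (V v); repeat split; try apply rt_refl; constructor.
Qed.

Lemma eps_pre (a : A) (m q : M) : weak_eps (MPre a m) q -> q = MPre a m.
Proof.
  intro H; apply clos_rt_rt1n in H; inversion H as [|y z Hstep]; subst; auto.
  inversion Hstep.
Qed.

Lemma wk_pre (s : list A) (a : A) (m : M) (v : verdict) :
  wk s (MPre a m) (V v) <-> exists s', s = a :: s' /\ wk s' m (V v).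
Proof.
  destruct s as [|b s]; simpl; split.
  - intro H; apply eps_pre in H; discriminate.
  - intros (s' & E & _); discriminate.
  - intros (m1 & (x & y & Hx & Hs & Hy) & H).
    apply eps_pre in Hx; subst; inversion Hs; subst.
    exists s; split; auto. eapply wk_eps_l; eauto.
  - intros (s' & E & H); injection E as -> ->.
    exists m; split; auto.
    exists (MPre a m), m; repeat split; try apply rt_refl; constructor.
Qed.

Lemma eps_step_sum_l (al : option A) (m n x y : M) :
  weak_eps m x -> step al x y -> exists x', weak_eps (MSum m n) x' /\ step al x' y.
Proof.
  intros Hx Hs; apply clos_rt_rt1n in Hx; destruct Hx as [|z x1 Hmz Hzx].
  - exists (MSum m n); split; [apply rt_refl|constructor; auto].
  - exists x1; split; auto. eapply rt_trans.
    + apply rt_step, st_suml; eauto.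
    + apply clos_rt1n_rt; auto.
Qed.

Lemma eps_step_sum_r (al : option A) (m n x y : M) :
  weak_eps n x -> step al x y -> exists x', weak_eps (MSum m n) x' /\ step al x' y.
Proof.
  intros Hx Hs; apply clos_rt_rt1n in Hx; destruct Hx as [|z x1 Hnz Hzx].
  - exists (MSum m n); split; [apply rt_refl|apply st_sumr; auto].
  - exists x1; split; auto. eapply rt_trans.
    + apply rt_step, st_sumr; eauto.
    + apply clos_rt1n_rt; auto.
Qed.

Lemma eps_sum (m n q : M) :
  weak_eps (MSum m n) q -> q = MSum m n \/ weak_eps m q \/ weak_eps n q.
Proof.
  intro H; apply clos_rt_rt1n in H; destruct H as [|y q' Hxy Hyq]; auto.
  apply clos_rt1n_rt in Hyq.
  inversion Hxy; subst; right; [left|right]; eapply rt_trans; eauto; apply rt_step; auto.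
Qed.

Lemma act_sum (a : A) (m n q : M) :
  weak_act a (MSum m n) q <-> weak_act a m q \/ weak_act a n q.
Proof.
  split.
  - intros (x & y & Hx & Hs & Hy).
    destruct (eps_sum Hx) as [->|[Hmx|Hnx]].
    + inversion Hs; subst; [left; exists m|right; exists n]; exists y;
        repeat split; auto; apply rt_refl.
    + left; exists x, y; auto.
    + right; exists x, y; auto.
  - intros [(x & y & Hx & Hs & Hy)|(x & y & Hx & Hs & Hy)].
    + destruct (eps_step_sum_l n Hx Hs) as (x' & Hx' & Hs'); exists x', y; auto.
    + destruct (eps_step_sum_r m Hx Hs) as (x' & Hx' & Hs'); exists x', y; auto.
Qed.

Lemma wk_sum (s : list A) (m n : M) (v : verdict) :
  wk s (MSum m n) (V v) <-> wk s m (V v) \/ wk s n (V v).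
Proof.
  destruct s as [|b s]; simpl; split.
  - intro H; destruct (eps_sum H) as [E|H']; [discriminate|auto].
  - assert (Hv : step None (V v) (V v)) by constructor.
    intros [H|H].
    + destruct (eps_step_sum_l n H Hv) as (x' & Hx' & Hs').
      eapply rt_trans; eauto; apply rt_step; auto.
    + destruct (eps_step_sum_r m H Hv) as (x' & Hx' & Hs').
      eapply rt_trans; eauto; apply rt_step; auto.
  - intros (m1 & H1 & H2); apply act_sum in H1.
    destruct H1; [left|right]; exists m1; auto.
  - intros [(m1 & H1 & H2)|(m1 & H1 & H2)]; exists m1; split; auto; apply act_sum; auto.
Qed.

Fixpoint acts (m : M) : list A :=
  match m with
  | MVerd _ _ => []
  | MPre a m => a :: acts m
  | MSum m n => acts m ++ acts n
  | MVar _ _ => []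
  end.

Lemma step_acts (al : option A) (m q : M) : step al m q -> incl (acts q) (acts m).
Proof.
  induction 1; simpl; intros x Hx; auto; try (apply in_or_app; auto); simpl; auto.
Qed.

Lemma eps_acts (m q : M) : weak_eps m q -> incl (acts q) (acts m).
Proof.
  induction 1; [eapply step_acts; eauto|apply incl_refl|eapply incl_tran; eauto].
Qed.

Lemma act_acts (a : A) (m q : M) : weak_act a m q -> incl (acts q) (acts m).
Proof.
  intros (x & y & Hx & Hs & Hy).
  eapply incl_tran; [apply (eps_acts Hy)|].
  eapply incl_tran; [apply (step_acts Hs)|apply (eps_acts Hx)].
Qed.

Lemma step_fresh (a : A) (p q : M) :
  step (Some a) p q -> ~ In a (acts p) -> exists v, q = V v /\ step None p q.
Proof.
  intro H; remember (Some a) as al.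
  induction H as [b m|al m n m' H IH|al m n m' H IH|al v]; intro Hn; subst.
  - injection Heqal as ->; simpl in Hn; tauto.
  - destruct IH as (v & -> & S); auto.
    + intro; apply Hn; simpl; apply in_or_app; auto.
    + exists v; split; auto; constructor; auto.
  - destruct IH as (v & -> & S); auto.
    + intro; apply Hn; simpl; apply in_or_app; auto.
    + exists v; split; auto; apply st_sumr; auto.
  - exists v; split; auto; constructor.
Qed.

Lemma wk_fresh (s u : list A) (a : A) (n : M) (v : verdict) :
  ~ In a (acts n) -> wk (s ++ a :: u) n (V v) -> wk s n (V v).
Proof.
  revert n; induction s as [|b s IH]; simpl; intros n Hn H.
  - destruct H as (m1 & (x & y & Hx & Hs & Hy) & H).
    destruct (step_fresh Hs) as (v' & -> & Hs').
    { intro Ha; apply Hn, (eps_acts Hx); auto. }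
    apply eps_verd in Hy; subst. apply wk_verd in H; injection H as ->.
    eapply rt_trans; eauto; apply rt_step; auto.
  - destruct H as (m1 & H1 & H2); exists m1; split; auto.
    apply IH; auto. intro Ha; apply Hn, (act_acts H1); auto.
Qed.

End WeakTraces.

Section MonitorLanguages.
Variable A : Type.
Local Notation M := (monitor A).
Local Notation V v := (MVerd A v).

Definition lang (v : verdict) (m : M) (s : list A) : Prop := weak s m (V v).

Lemma lang_wk (v : verdict) (m : M) (s : list A) : lang v m s <-> wk s m (V v).
Proof. apply weak_wk. Qed.

Lemma lang_verd (v u : verdict) (s : list A) : lang v (V u) s <-> u = v.
Proof.
  rewrite lang_wk; split.
  - intro H; apply wk_verd in H; injection H; auto.
  - intros ->; apply wk_verd_refl.
Qed.

Lemma lang_pre (v : verdict) (a : A) (m : M) :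
  lang_equiv (lang v (MPre a m)) (lpre a (lang v m)).
Proof.
  intro s; unfold lpre; rewrite lang_wk, wk_pre.
  split; intros (s' & E & H); exists s'; split; auto; apply lang_wk; auto.
Qed.

Lemma lang_sum (v : verdict) (m n : M) :
  lang_equiv (lang v (MSum m n)) (lunion (lang v m) (lang v n)).
Proof. intro s; unfold lunion; rewrite !lang_wk; apply wk_sum. Qed.

Lemma lang_ext_closed (v : verdict) (m : M) : ext_closed (lang v m).
Proof.
  intros s t; rewrite !lang_wk; intro H; eapply wk_app; eauto; apply wk_verd_refl.
Qed.

Lemma lang_cut_letter (v : verdict) (a : A) (m : M) :
  ~ In a (acts m) -> cut_letter a (lang v m).
Proof. intros Ha s u; rewrite !lang_wk; apply wk_fresh; auto. Qed.

Lemma fresh_action (l : list A) : ~ finite_type A -> exists a, ~ In a l.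
Proof.
  intro Hinf; apply NNPP; intro Hall; apply Hinf; exists l.
  intro a; apply NNPP; intro Ha; apply Hall; exists a; auto.
Qed.

Lemma lang_omega_equiv (v : verdict) (m n : M) :
  ~ finite_type A -> omega_equiv (lang v m) (lang v n) -> lang_equiv (lang v m) (lang v n).
Proof.
  intro Hinf; destruct (fresh_action (acts m ++ acts n) Hinf) as (a & Ha).
  apply omega_equiv_lang_equiv with a; try apply lang_ext_closed;
    apply lang_cut_letter; intro; apply Ha, in_or_app; auto.
Qed.

Definition lift (R : (list A -> Prop) -> (list A -> Prop) -> Prop) (m n : M) : Prop :=
  forall sigma, closed_subst sigma ->
    R (lang vyes (subst sigma m)) (lang vyes (subst sigma n)) /\
    R (lang vno (subst sigma m)) (lang vno (subst sigma n)).

Lemma verd_eq_lift : @verd_eq A = lift (@lang_equiv A).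
Proof. reflexivity. Qed.

Lemma verd_eq_omega_lift : @verd_eq_omega A = lift (@omega_equiv A).
Proof. reflexivity. Qed.

Lemma lift_mono (R R' : (list A -> Prop) -> (list A -> Prop) -> Prop) (m n : M) :
  (forall L1 L2, R L1 L2 -> R' L1 L2) -> lift R m n -> lift R' m n.
Proof. intros HRR' H sigma Hs; destruct (H sigma Hs); split; auto. Qed.

Section Lift.
Variable R : (list A -> Prop) -> (list A -> Prop) -> Prop.
Hypothesis HR : lang_congruence R.

Lemma R_respects (L1 L2 L1' L2' : list A -> Prop) :
  lang_equiv L1 L1' -> lang_equiv L2 L2' -> R L1 L2 -> R L1' L2'.
Proof.
  intros H1 H2 H. apply (lc_trans HR) with L2; [|apply (lc_ext HR); auto].
  apply (lc_trans HR) with L1; auto.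
  apply (lc_sym HR), (lc_ext HR); auto.
Qed.

Lemma R_lang_pre (v : verdict) (a : A) (m n : M) :
  R (lang v m) (lang v n) -> R (lang v (MPre a m)) (lang v (MPre a n)).
Proof.
  intro H. apply R_respects with (lpre a (lang v m)) (lpre a (lang v n)).
  - intro s; symmetry; apply lang_pre.
  - intro s; symmetry; apply lang_pre.
  - apply (lc_pre HR); auto.
Qed.

Lemma R_lang_sum (v : verdict) (m m' n n' : M) :
  R (lang v m) (lang v n) -> R (lang v m') (lang v n') ->
  R (lang v (MSum m m')) (lang v (MSum n n')).
Proof.
  intros H H'.
  apply R_respects with (lunion (lang v m) (lang v m')) (lunion (lang v n) (lang v n')).
  - intro s; symmetry; apply lang_sum.
  - intro s; symmetry; apply lang_sum.
  - apply (lc_union HR); auto.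
Qed.

Lemma lift_congruence : congruence (lift R).
Proof.
  split; [split|split].
  - intros m sigma Hs; split; apply (lc_ext HR); intro; tauto.
  - intros m n p H1 H2 sigma Hs; destruct (H1 sigma Hs), (H2 sigma Hs);
      split; eapply (lc_trans HR); eauto.
  - intros m n H sigma Hs; destruct (H sigma Hs); split; apply (lc_sym HR); auto.
  - intros a m n H sigma Hs; destruct (H sigma Hs); split; apply R_lang_pre; auto.
  - intros m m' n n' H H' sigma Hs; destruct (H sigma Hs), (H' sigma Hs);
      split; apply R_lang_sum; auto.
Qed.

End Lift.

Lemma subst_closed (sigma : nat -> M) (m : M) : closed m -> subst sigma m = m.
Proof.
  induction m as [v|a m IH|m IHm n IHn|x]; simpl; intro Hc; try tauto.
  - rewrite IH; auto.
  - destruct Hc; rewrite IHm, IHn; auto.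
Qed.

Section FiniteWitness.

Fixpoint choice (b : A) (l : list A) : M :=
  match l with
  | [] => MPre b (V vyes)
  | c :: l' => MSum (MPre b (V vyes)) (choice c l')
  end.

Lemma choice_closed (b : A) (l : list A) : closed (choice b l).
Proof. revert b; induction l; simpl; auto. Qed.

Lemma lang_choice (v : verdict) (b : A) (l : list A) (s : list A) :
  lang v (choice b l) s <-> v = vyes /\ exists c s', s = c :: s' /\ In c (b :: l).
Proof.
  assert (Hpre : forall c, lang v (MPre c (V vyes)) s <->
                           v = vyes /\ exists s', s = c :: s').
  { intro c; rewrite (lang_pre v c (V vyes) s); unfold lpre; split.
    - intros (s' & -> & H); apply lang_verd in H; eauto.
    - intros (-> & s' & ->); exists s'; split; auto; apply lang_verd; auto. }
  revert b; induction l as [|c l IH]; intro b; simpl.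
  - rewrite Hpre; split.
    + intros (-> & s' & ->); split; auto; exists b, s'; simpl; auto.
    + intros (-> & c & s' & -> & [->|[]]); eauto.
  - rewrite (lang_sum v _ _ s); unfold lunion; rewrite Hpre, IH; split.
    + intros [(-> & s' & ->)|(-> & d & s' & -> & Hd)]; split; auto.
      * exists b, s'; simpl; auto.
      * exists d, s'; simpl; auto.
    + intros (-> & d & s' & -> & [->|Hd]); [left|right]; split; eauto.
Qed.

End FiniteWitness.

Lemma verd_eq_congruence : congruence (@verd_eq A).
Proof. rewrite verd_eq_lift; apply lift_congruence, lang_equiv_congruence. Qed.

Lemma verd_eq_omega_congruence : congruence (@verd_eq_omega A).
Proof. rewrite verd_eq_omega_lift; apply lift_congruence, omega_equiv_congruence. Qed.

Lemma verd_eq_incl_omega (m n : M) : verd_eq m n -> verd_eq_omega m n.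
Proof.
  rewrite verd_eq_lift, verd_eq_omega_lift; apply lift_mono, lang_equiv_omega_equiv.
Qed.

(* Part (ii), strictness: over a finite alphabet listed by [l], every infinite
   word starts with an action of [l], so Σ_{a ∈ l} a.yes is ω-equivalent to
   yes, yet only yes accepts the empty trace. *)
Lemma finite_separation :
  inhabited A -> finite_type A -> exists m n : M, verd_eq_omega m n /\ ~ verd_eq m n.
Proof.
  intros [a0] [l Hl]; exists (choice a0 l), (V vyes).
  rewrite verd_eq_lift, verd_eq_omega_lift; split.
  - intros sigma Hs; rewrite subst_closed by apply choice_closed; simpl.
    split; intro w; split.
    + intros _; exists []; split; [apply lang_verd; auto|simpl; intros; lia].
    + intros _; exists [w 0]; split.
      * apply lang_choice; split; eauto; exists (w 0), []; simpl; auto.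
      * intros [|i] d Hi; simpl in *; auto; lia.
    + intros (s & H & _); apply lang_choice in H; destruct H; discriminate.
    + intros (s & H & _); apply lang_verd in H; discriminate.
  - intro H; destruct (H (fun _ => V vyes)) as [Hyes _]; [intro; simpl; auto|].
    rewrite subst_closed in Hyes by apply choice_closed.
    assert (Hnil : lang vyes (choice a0 l) []) by (apply Hyes, lang_verd; auto).
    apply lang_choice in Hnil; destruct Hnil as (_ & c & s' & E & _); discriminate.
Qed.

Lemma infinite_omega_incl (m n : M) :
  ~ finite_type A -> verd_eq_omega m n -> verd_eq m n.
Proof.
  rewrite verd_eq_lift, verd_eq_omega_lift; intros Hinf H sigma Hs.
  destruct (H sigma Hs); split; apply lang_omega_equiv; auto.
Qed.

End MonitorLanguages.

Theorem mainTheorem2 (Act : Type) (HAct : inhabited Act) :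
  (* (i) *)
  (congruence (@verd_eq Act) /\ congruence (@verd_eq_omega Act)) /\
  (* (ii) *)
  ((forall m n : monitor Act, verd_eq m n -> verd_eq_omega m n) /\
   (finite_type Act ->
      exists m n : monitor Act, verd_eq_omega m n /\ ~ verd_eq m n)) /\
  (* (iii) *)
  (~ finite_type Act ->
     forall m n : monitor Act, verd_eq m n <-> verd_eq_omega m n).
Proof.
  split; [|split; [split|]].
  - split; [apply verd_eq_congruence|apply verd_eq_omega_congruence].
  - apply verd_eq_incl_omega.
  - apply finite_separation; auto.
  - intros Hinf m n; split; [apply verd_eq_incl_omega|apply infinite_omega_incl; auto].
Qed.
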